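(* Let $(\lambda,v)$ be an exact eigenpair of the eigenvalue problem on $V$ (so $\langle v,v\rangle=1$), with $\lambda$ simple, and let $\mathfrak V^{(k)}\subset V$ be a finite-dimensional subspace with Galerkin eigenpairs $(\bar\lambda_j^{(k)},\bar v_j^{(k)})_{j=1}^{N_k}$. Let $i$ be an index such that $1/\bar\lambda_i^{(k)}$ is the closest of the numbers $1/\bar\lambda_j^{(k)}$ to $1/\lambda$, and assume $\delta_\lambda^{(k)}:=\min_{j\neq i}\big|\frac1{\bar\lambda_j^{(k)}}-\frac1\lambda\big|>0$. Let $E_{i,k}:V\to\operatorname{span}\{\bar v_i^{(k)}\}$ be defined by $\langle E_{i,k}w,\bar v_i^{(k)}\rangle=\langle w,\bar v_i^{(k)}\rangle$ for all $w\in V$. Then $$\|E_{i,k}v-v\|\le\sqrt{1+\frac{1}{\lambda_1(\delta_\lambda^{(k)})^2}\eta^2(\mathfrak V^{(k)})}\;\delta_k(\lambda),$$ $$\|E_{i,k}v-v\|_0\le\Big(1+\frac1{\lambda_1\delta_\lambda^{(k)}}\Big)\eta(\mathfrak V^{(k)})\,\|E_{i,k}v-v\|.$$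
   Context: Let $V\subset V_0\subset V^*$ be real Hilbert spaces forming a Gelfand triple ($V^*$ the dual of $V$; the pairing $[\cdot,\cdot]$ between $V^*$ and $V$ extends the inner product of $V_0$, whose norm is $\|\cdot\|_0$; $V_0\to V^*$ compact and dense). $\mathcal L:V\to V^*$ is a symmetric positive linear bijection; $\langle u,w\rangle:=[\mathcal Lu,w]$, $\|u\|^2=\langle u,u\rangle$. (In the paper $V$ is finite-dimensional.) Eigenvalue problem: find $(\lambda,v)\in\mathbb R\times V$ with $\langle v,v\rangle=1$ and $\langle v,w\rangle=\lambda[v,w]$ for all $w\in V$; its eigenvalues are $0<\lambda_1\le\lambda_2\le\cdots$, and $\lambda_1=\min_{0\ne w\in V}\langle w,w\rangle/[w,w]$. $M(\lambda)$ denotes the eigenspace of $\lambda$. For a subspace $\mathfrak V^{(k)}$ with $N_k=\dim\mathfrak V^{(k)}$, the Galerkin problem is: find $(\bar\lambda,\bar v)\in\mathbb R\times\mathfrak V^{(k)}$ with $\langle\bar v,\bar v\rangle=1$ and $\langle\bar v,w\rangle=\bar\lambda[\bar v,w]$ for all $w\in\mathfrak V^{(k)}$; its eigenpairs are $(\bar\lambda_j^{(k)},\bar v_j^{(k)})$, $j=1,\dots,N_k$, with $0<\bar\lambda_1^{(k)}\le\dots\le\bar\lambda_{N_k}^{(k)}$ and $\langle\bar v_i^{(k)},\bar v_j^{(k)}\rangle=\delta_{ij}$. $\eta(\mathfrak V^{(k)}):=\sup_{f\in V_0,\|f\|_0=1}\inf_{w\in\mathfrak V^{(k)}}\|\mathcal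 L^{-1}f-w\|$; $\delta_k(\lambda):=\sup_{u\in M(\lambda),\|u\|=1}\inf_{w\in\mathfrak V^{(k)}}\|u-w\|$. *)

From HB Require Import structures.
From mathcomp Require Import all_boot all_order all_algebra.
From mathcomp Require Import boolp classical_sets reals.
Set Implicit Arguments. Unset Strict Implicit. Unset Printing Implicit Defensive.
Import Order.TTheory GRing.Theory Num.Theory.
Local Open Scope ring_scope.
Local Open Scope classical_set_scope.

(* Since V is finite-dimensional,
   the Gelfand triple collapses as sets (V = V_0 = V^* ), V_0 carrying the
   inner product [u,w] = u M w^T, and the energy inner product
   <u,w> = [L u, w] = u A w^T, with A, M symmetric positive definite. *)

Section Defs.
Variables (R : realType) (n : nat).

Definition bform (B : 'M[R]_n) (u w : 'rV[R]_n) : R := (u *m B *m w^T) 0 0.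

Definition sym_posdef (B : 'M[R]_n) : Prop :=
  B^T = B /\ forall u : 'rV[R]_n, u != 0 -> 0 < bform B u u.

Definition normf (B : 'M[R]_n) (u : 'rV[R]_n) : R := Num.sqrt (bform B u u).

(* L^{-1} f : the u in V with <u,w> = [f,w] for all w, i.e. u A = f M. *)
Definition Linv (A M : 'M[R]_n) (f : 'rV[R]_n) : 'rV[R]_n := f *m M *m invmx A.

Definition eigsp (A M : 'M[R]_n) (lam : R) : set 'rV[R]_n :=
  [set u | forall w, bform A u w = lam * bform M u w].

Definition lambda1 (A M : 'M[R]_n) : R :=
  inf [set r | exists w : 'rV[R]_n, w != 0 /\ r = bform A w w / bform M w w].

Definition distA m (A : 'M[R]_n) (S : 'M[R]_(m, n)) (x : 'rV[R]_n) : R :=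
  inf [set r | exists w : 'rV[R]_n, (w <= S)%MS /\ r = normf A (x - w)].

Definition etaV m (A M : 'M[R]_n) (S : 'M[R]_(m, n)) : R :=
  sup [set r | exists f : 'rV[R]_n, normf M f = 1 /\ r = distA A S (Linv A M f)].

Definition delta_k m (A M : 'M[R]_n) (S : 'M[R]_(m, n)) (lam : R) : R :=
  sup [set r | exists u, eigsp A M lam u /\ normf A u = 1 /\ r = distA A S u].

Definition delta_gap N (lb : 'I_N -> R) (i : 'I_N) (lam : R) : R :=
  inf [set r | exists j : 'I_N, j != i /\ r = `|(lb j)^-1 - lam^-1|].

End Defs.

From HB Require Import structures.
From mathcomp Require Import all_boot all_order all_algebra.
From mathcomp Require Import boolp classical_sets reals.
From mathcomp Require Import ring lra.
Import Order.TTheory GRing.Theory Num.Theory.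
Set Implicit Arguments. Unset Strict Implicit. Unset Printing Implicit Defensive.
Local Open Scope ring_scope.
Local Open Scope classical_set_scope.

(* Let [P] be the energy projection onto [V_k] and [a_j = <v, vb_j>], so that
   [E v = a_i vb_i].  Split [E v - v = -(e + d)] with [e = v - P v] orthogonal
   to [V_k] and [d = P v - E v] in [V_k]; then [|e| <= delta_k] and
   [|E v - v|^2 = |e|^2 + |d|^2].  The two eigen-equations give
   [[e, vb_j] = a_j (1/lam - 1/lb_j)], while [d] has coefficients [a_j] for
   [j <> i]; the spectral gap therefore bounds [gap |d|] by
   [|P L^-1 e|], and duality with [e] orthogonal to [V_k] bounds that by
   [eta |e| / sqrt lambda_1].  The [V_0] estimate is the Aubin-Nitsche
   argument applied to [L^-1 (E v - v)]. *)

Section BilinearForm.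
Variables (R : realType) (n : nat).
Implicit Types (B : 'M[R]_n) (u w : 'rV[R]_n).

Lemma bformDl B u1 u2 w : bform B (u1 + u2) w = bform B u1 w + bform B u2 w.
Proof. by rewrite /bform !mulmxDl mxE. Qed.

Lemma bformDr B u w1 w2 : bform B u (w1 + w2) = bform B u w1 + bform B u w2.
Proof. by rewrite /bform linearD /= mulmxDr mxE. Qed.

Lemma bformZl B a u w : bform B (a *: u) w = a * bform B u w.
Proof. by rewrite /bform -!scalemxAl mxE. Qed.

Lemma bformZr B a u w : bform B u (a *: w) = a * bform B u w.
Proof. by rewrite /bform linearZ /= -scalemxAr mxE. Qed.

Lemma bformNl B u w : bform B (- u) w = - bform B u w.
Proof. by rewrite -scaleN1r bformZl mulN1r. Qed.

Lemma bformNr B u w : bform B u (- w) = - bform B u w.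
Proof. by rewrite -scaleN1r bformZr mulN1r. Qed.

Lemma bformBl B u1 u2 w : bform B (u1 - u2) w = bform B u1 w - bform B u2 w.
Proof. by rewrite bformDl bformNl. Qed.

Lemma bformBr B u w1 w2 : bform B u (w1 - w2) = bform B u w1 - bform B u w2.
Proof. by rewrite bformDr bformNr. Qed.

Lemma bform0l B w : bform B 0 w = 0.
Proof. by rewrite /bform !mul0mx mxE. Qed.

Lemma bform0r B u : bform B u 0 = 0.
Proof. by rewrite /bform linear0 mulmx0 mxE. Qed.

Lemma bform_suml B (I : finType) (F : I -> 'rV[R]_n) w :
  bform B (\sum_j F j) w = \sum_j bform B (F j) w.
Proof. by elim/big_rec2: _ => [|j a b _ <-]; rewrite ?bform0l ?bformDl. Qed.

Lemma bform_sumr B (I : finType) (F : I -> 'rV[R]_n) u :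
  bform B u (\sum_j F j) = \sum_j bform B u (F j).
Proof. by elim/big_rec2: _ => [|j a b _ <-]; rewrite ?bform0r ?bformDr. Qed.

Lemma bformC B u w : B^T = B -> bform B u w = bform B w u.
Proof.
move=> symB; rewrite /bform.
transitivity ((u *m B *m w^T)^T 0 0); first by rewrite [RHS]mxE.
by rewrite !trmx_mul trmxK symB mulmxA.
Qed.

Lemma normfZ B a u : normf B (a *: u) = `|a| * normf B u.
Proof.
by rewrite /normf bformZl bformZr mulrA -expr2 sqrtrM ?sqr_ge0 // sqrtr_sqr.
Qed.

Lemma normfN B u : normf B (- u) = normf B u.
Proof. by rewrite -scaleN1r normfZ normrN1 mul1r. Qed.

Lemma normf0 B : normf B 0 = 0.
Proof. by rewrite /normf bform0l sqrtr0. Qed.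

Lemma normf_ge0 B u : 0 <= normf B u.
Proof. exact: sqrtr_ge0. Qed.

End BilinearForm.

Section PositiveDefinite.
Variables (R : realType) (n : nat) (B : 'M[R]_n).
Hypothesis posB : sym_posdef B.
Implicit Types (u w : 'rV[R]_n).

Lemma bform_sym u w : bform B u w = bform B w u.
Proof. exact: bformC posB.1. Qed.

Lemma bform_ge0 u : 0 <= bform B u u.
Proof.
have [->|u_neq0] := eqVneq u 0; first by rewrite bform0l.
exact/ltW/posB.2.
Qed.

Lemma bform_eq0 u : bform B u u = 0 -> u = 0.
Proof.
move=> uu0; apply/eqP; apply: contraT => u_neq0.
by have := posB.2 u u_neq0; rewrite uu0 ltxx.
Qed.

Lemma posdef_unitmx : B \in unitmx.
Proof.
rewrite -row_free_unit; apply/inj_row_free => u uB0.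
by apply: bform_eq0; rewrite /bform uB0 mul0mx mxE.
Qed.

Lemma sqr_normf u : normf B u ^+ 2 = bform B u u.
Proof. exact/sqr_sqrtr/bform_ge0. Qed.

Lemma normf_eq0 u : normf B u = 0 -> u = 0.
Proof. by move=> nu0; apply: bform_eq0; rewrite -sqr_normf nu0 expr0n. Qed.

(* Cauchy-Schwarz, from the positivity of [bform (c u - b w) (c u - b w)]
   with [b = bform u w] and [c = bform w w]. *)
Lemma sqr_bform_le u w : bform B u w ^+ 2 <= bform B u u * bform B w w.
Proof.
have [->|w_neq0] := eqVneq w 0; first by rewrite !bform0r expr0n mulr0.
set a := bform B u u; set b := bform B u w; set c := bform B w w.
have c_gt0 : 0 < c by exact: posB.2.
have := bform_ge0 (c *: u - b *: w).
rewrite !(bformBl, bformBr, bformZl, bformZr) -/a -/b -/c (bform_sym w u) -/b.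
nra.
Qed.

Lemma bform_le_normf u w : `|bform B u w| <= normf B u * normf B w.
Proof.
rewrite /normf -sqrtrM ?bform_ge0 // -sqrtr_sqr.
exact/ler_wsqrtr/sqr_bform_le.
Qed.

Lemma sqr_normfD_orth u w : bform B u w = 0 ->
  normf B (u + w) ^+ 2 = normf B u ^+ 2 + normf B w ^+ 2.
Proof.
move=> uw0; rewrite !sqr_normf !(bformDl, bformDr) uw0 (bform_sym w u) uw0.
by rewrite addr0 add0r.
Qed.

Lemma normf_le_orth u w : bform B u w = 0 -> normf B u <= normf B (u + w).
Proof.
move=> uw0; rewrite -ler_sqr ?nnegrE ?normf_ge0 // sqr_normfD_orth //.
by rewrite lerDl sqr_ge0.
Qed.

End PositiveDefinite.

Section NormEquivalence.
Variables (R : realType) (n : nat).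
Implicit Types (B : 'M[R]_n) (u : 'rV[R]_n).

Definition sqn u := bform 1%:M u u.

Definition abs_sum B := \sum_i \sum_j `|B i j|.

Lemma abs_sum_ge0 B : 0 <= abs_sum B.
Proof. by rewrite sumr_ge0 // => i _; rewrite sumr_ge0. Qed.

Lemma sqnE u : sqn u = \sum_k u 0 k ^+ 2.
Proof.
rewrite /sqn /bform mulmx1 mxE.
by apply: eq_bigr => k _; rewrite mxE expr2.
Qed.

Lemma sqr_coord_le_sqn u k : u 0 k ^+ 2 <= sqn u.
Proof. by rewrite sqnE (bigD1 k) //= lerDl sumr_ge0 // => j _; rewrite sqr_ge0. Qed.

(* [|u_i u_j| <= (u_i^2 + u_j^2) / 2 <= sqn u] termwise. *)
Lemma bform_le_sqn B u : bform B u u <= abs_sum B * sqn u.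
Proof.
have -> : bform B u u = \sum_i \sum_j u 0 i * B i j * u 0 j.
  rewrite /bform mxE exchange_big; apply: eq_bigr => j _.
  by rewrite !mxE mulr_suml; apply: eq_bigr => i _.
rewrite /abs_sum mulr_suml; apply: le_trans (ler_norm _) _.
apply: le_trans (ler_norm_sum _ _ _) _; apply: ler_sum => i _.
rewrite mulr_suml; apply: le_trans (ler_norm_sum _ _ _) _; apply: ler_sum => j _.
have ui := sqr_coord_le_sqn u i; have uj := sqr_coord_le_sqn u j.
rewrite -real_normK ?num_real // in ui; rewrite -real_normK ?num_real // in uj.
have uij : `|u 0 i| * `|u 0 j| <= sqn u.
  by have := normr_ge0 (u 0 i); have := normr_ge0 (u 0 j); nra.
by rewrite !normrM mulrAC [X in X <= _]mulrC ler_wpM2l.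
Qed.

(* Cauchy-Schwarz for [bform A] with [y = u A^-1], for which
   [bform A y u = sqn u] and [bform A y y = bform A^-1 u u]. *)
Lemma sqn_le_bform A u : sym_posdef A -> sqn u <= abs_sum (invmx A) * bform A u u.
Proof.
move=> posA; have unitA := posdef_unitmx posA.
set y := u *m invmx A.
have yu : bform A y u = sqn u by rewrite /bform mulmxKV // /sqn /bform mulmx1.
have yy : bform A y y = bform (invmx A) u u.
  by rewrite /bform mulmxKV // trmx_mul trmx_inv posA.1 mulmxA.
have := sqr_bform_le posA y u; rewrite yu yy => cs.
have [sqn_le0|sqn_gt0] := leP (sqn u) 0.
  by apply: le_trans sqn_le0 _; rewrite mulr_ge0 ?abs_sum_ge0 ?bform_ge0.
rewrite -(ler_pM2r sqn_gt0) -expr2 mulrAC; apply: le_trans cs _.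
by rewrite ler_wpM2r ?bform_ge0 ?bform_le_sqn.
Qed.

Lemma posdef_bform_le A M : sym_posdef A ->
  exists2 C, 0 < C & forall u, bform M u u <= C * bform A u u.
Proof.
move=> posA; exists (abs_sum M * abs_sum (invmx A) + 1) => [|u].
  by rewrite ltr_pwDr ?mulr_ge0 ?abs_sum_ge0.
apply: le_trans (bform_le_sqn M u) _.
apply: le_trans (_ : _ <= abs_sum M * (abs_sum (invmx A) * bform A u u)) _.
  by rewrite ler_wpM2l ?abs_sum_ge0 ?sqn_le_bform.
by rewrite mulrA mulrDl mul1r lerDl bform_ge0.
Qed.

End NormEquivalence.

Section Rayleigh.
Variables (R : realType) (n : nat) (A M : 'M[R]_n).
Hypotheses (posA : sym_posdef A) (posM : sym_posdef M).
Implicit Types (u f w : 'rV[R]_n).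

Lemma lambda1_le u : lambda1 A M * bform M u u <= bform A u u.
Proof.
have [->|u_neq0] := eqVneq u 0; first by rewrite !bform0l mulr0.
have Mu_gt0 : 0 < bform M u u by exact: posM.2.
rewrite -ler_pdivlMr //; apply: ge_inf; last by exists u.
by exists 0 => _ [w [_ ->]]; rewrite divr_ge0 ?bform_ge0.
Qed.

Lemma lambda1_gt0 w : w != 0 -> 0 < lambda1 A M.
Proof.
move=> w_neq0; have [C C_gt0 MleA] := posdef_bform_le M posA.
apply: lt_le_trans (_ : C^-1 <= _); first by rewrite invr_gt0.
apply: lb_le_inf; first by exists (bform A w w / bform M w w), w.
move=> _ [u [u_neq0 ->]]; have Mu_gt0 : 0 < bform M u u by exact: posM.2.
by rewrite ler_pdivlMr // ler_pdivrMl.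
Qed.

Lemma lambda1_ge0 : 0 <= lambda1 A M.
Proof.
have [[w /lambda1_gt0 /ltW //] | all0] := pselect (exists w : 'rV[R]_n, w != 0).
rewrite /lambda1; set X := (X in inf X); suff -> : X = set0 by rewrite inf0.
by rewrite -subset0 => r [w [w_neq0 _]]; apply: all0; exists w.
Qed.

Lemma normf_lambda1_le u : Num.sqrt (lambda1 A M) * normf M u <= normf A u.
Proof. by rewrite -sqrtrM ?lambda1_ge0 // ler_wsqrtr // lambda1_le. Qed.

Lemma Linv_bform f w : bform A (Linv A M f) w = bform M f w.
Proof. by rewrite /bform /Linv mulmxKV // posdef_unitmx. Qed.

Lemma LinvZ a f : Linv A M (a *: f) = a *: Linv A M f.
Proof. by rewrite /Linv -!scalemxAl. Qed.

(* [|L^-1 f|^2 = [f, L^-1 f] <= |f|_0 |L^-1 f|_0 <= |f|_0 |L^-1 f| / sqrt lambda1]. *)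
Lemma normf_Linv_le f : Num.sqrt (lambda1 A M) * normf A (Linv A M f) <= normf M f.
Proof.
set x := Linv A M f; set s := Num.sqrt (lambda1 A M).
have [x0|x_gt0] := leP (normf A x) 0.
  by rewrite (@le_anti _ _ (normf A x) 0) ?x0 ?normf_ge0 // mulr0 normf_ge0.
rewrite -(ler_pM2r x_gt0) -mulrA -expr2 sqr_normf // Linv_bform.
apply: le_trans (_ : _ <= s * (normf M f * normf M x)) _.
  by rewrite ler_wpM2l ?sqrtr_ge0 // (le_trans (ler_norm _)) ?bform_le_normf.
by rewrite mulrCA ler_wpM2l ?normf_ge0 ?normf_lambda1_le.
Qed.

End Rayleigh.

Section EnergyProjection.
Variables (R : realType) (n m N : nat) (A : 'M[R]_n) (S : 'M[R]_(m, n)).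
Variable vb : 'I_N -> 'rV[R]_n.
Hypotheses (posA : sym_posdef A) (rankS : \rank S = N)
  (vb_sub : forall j, (vb j <= S)%MS)
  (vb_orthonormal : forall j1 j2, bform A (vb j1) (vb j2) = (j1 == j2)%:R).
Implicit Types (u w z : 'rV[R]_n).

Definition Aproj w := \sum_j bform A w (vb j) *: vb j.

Lemma bform_comb_vb (c : 'I_N -> R) k : bform A (\sum_j c j *: vb j) (vb k) = c k.
Proof.
rewrite bform_suml (bigD1 k) //= bformZl vb_orthonormal eqxx mulr1.
by rewrite big1 ?addr0 // => j /negbTE jk; rewrite bformZl vb_orthonormal jk mulr0.
Qed.

Lemma bform_Aproj_vb w k : bform A (Aproj w) (vb k) = bform A w (vb k).
Proof. exact: bform_comb_vb. Qed.

Lemma Aproj_sub w : (Aproj w <= S)%MS.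
Proof. by apply: summx_sub => j _; apply: scalemx_sub. Qed.

Lemma AprojZ a w : Aproj (a *: w) = a *: Aproj w.
Proof. by rewrite /Aproj scaler_sumr; apply: eq_bigr => j _; rewrite bformZl scalerA. Qed.

(* The [vb j] are free since their Gram matrix is the identity, and there are
   [\rank S] of them. *)
Lemma vb_span : (S <= \matrix_(j < N) vb j)%MS.
Proof.
set B := \matrix_(j < N) vb j.
have BS : (B <= S)%MS by apply/row_subP => j; rewrite rowK.
have gram : B *m (A *m B^T) = 1%:M.
  apply/matrixP => j1 j2; rewrite mulmxA [RHS]mxE -vb_orthonormal /bform !mxE.
  apply: eq_bigr => k _; rewrite !mxE; congr (_ * _).
  by apply: eq_bigr => l _; rewrite !mxE.
have /eqP rankB : row_free B by apply/row_freeP; exists (A *m B^T).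
by rewrite -(mxrank_leqif_sup BS).2 rankB rankS.
Qed.

Lemma Aproj_id w : (w <= S)%MS -> Aproj w = w.
Proof.
move=> /submx_trans /(_ vb_span) /submxP [c ->].
rewrite mulmx_sum_row; under eq_bigr => j _ do rewrite rowK.
by apply: eq_bigr => j _; rewrite bform_comb_vb.
Qed.

Lemma Aproj_orth w z : (z <= S)%MS -> bform A (w - Aproj w) z = 0.
Proof.
move=> zS; rewrite -(Aproj_id zS) bform_sumr big1 // => j _.
by rewrite bformZr bformBl bform_Aproj_vb subrr mulr0.
Qed.

Lemma sqr_normf_coord w : (w <= S)%MS ->
  normf A w ^+ 2 = \sum_k bform A w (vb k) ^+ 2.
Proof.
move=> wS; rewrite sqr_normf // -{2}(Aproj_id wS) bform_sumr.
by apply: eq_bigr => k _; rewrite bformZr expr2.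
Qed.

Lemma normf_Aproj_le w : normf A (Aproj w) <= normf A w.
Proof.
have orth : bform A (Aproj w) (w - Aproj w) = 0.
  by rewrite bform_sym // Aproj_orth // Aproj_sub.
by have := normf_le_orth posA orth; rewrite subrKC.
Qed.

Lemma distA_Aproj w : distA A S w = normf A (w - Aproj w).
Proof.
apply/le_anti/andP; split.
  apply: ge_inf; first by exists 0 => _ [z [_ ->]]; apply: normf_ge0.
  by exists (Aproj w); split => //; apply: Aproj_sub.
apply: lb_le_inf.
  by exists (normf A (w - Aproj w)), (Aproj w); split => //; apply: Aproj_sub.
move=> _ [z [zS ->]].
have orth : bform A (w - Aproj w) (Aproj w - z) = 0.
  by apply: Aproj_orth; rewrite addmx_sub ?eqmx_opp ?Aproj_sub.
by have := normf_le_orth posA orth; rewrite addrA subrK.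
Qed.

Lemma distA_ge0 w : 0 <= distA A S w.
Proof.
apply: lb_le_inf; last by move=> _ [z [_ ->]]; apply: normf_ge0.
by exists (normf A (w - 0)), 0; rewrite sub0mx.
Qed.

Lemma distA_le w : distA A S w <= normf A w.
Proof.
rewrite distA_Aproj; have orth := Aproj_orth w (Aproj_sub w).
by have := normf_le_orth posA orth; rewrite subrK.
Qed.

Lemma distAZ a w : distA A S (a *: w) = `|a| * distA A S w.
Proof. by rewrite !distA_Aproj AprojZ -scalerBr normfZ. Qed.

Lemma distA_le_delta_k (M : 'M[R]_n) lam v :
  normf A v = 1 -> eigsp A M lam v ->
  (forall u, eigsp A M lam u -> exists c : R, u = c *: v) ->
  distA A S v <= delta_k A M S lam.
Proof.
move=> v1 v_eig lam_simple; apply: ub_le_sup; last by exists v; split; [|split].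
exists (distA A S v) => _ [u [/lam_simple [c ->] [cv1 ->]]].
by move: cv1; rewrite normfZ v1 mulr1 => c1; rewrite distAZ c1 mul1r.
Qed.

Variable M : 'M[R]_n.
Hypothesis posM : sym_posdef M.

Lemma distA_Linv_le f : distA A S (Linv A M f) <= etaV A M S * normf M f.
Proof.
have [->|f_neq0] := eqVneq f 0.
  by rewrite -(scale0r (0 : 'rV[R]_n)) LinvZ distAZ normfZ normr0 !mul0r mulr0.
have f_gt0 : 0 < normf M f.
  by rewrite lt_def normf_ge0 andbT; apply: contra_neq f_neq0 => /(normf_eq0 posM).
set g := (normf M f)^-1 *: f.
have g1 : normf M g = 1 by rewrite normfZ ger0_norm ?invr_ge0 ?ltW ?mulVf ?gt_eqF.
have -> : f = normf M f *: g by rewrite scalerA divff ?gt_eqF ?scale1r.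
rewrite LinvZ distAZ normfZ g1 mulr1 ger0_norm ?(ltW f_gt0) // mulrC ler_pM2r //.
apply: ub_le_sup; last by exists g.
exists (Num.sqrt (lambda1 A M))^-1 => _ [h [h1 ->]].
have h_neq0 : h != 0.
  by apply/eqP => h0; move: h1; rewrite h0 normf0 => /eqP; rewrite eq_sym oner_eq0.
have s_gt0 : 0 < Num.sqrt (lambda1 A M) by rewrite sqrtr_gt0 (lambda1_gt0 posA posM h_neq0).
apply: le_trans (distA_le _) _.
by rewrite -[X in _ <= X]mulr1 ler_pdivlMl // -h1 normf_Linv_le.
Qed.

Lemma etaV_ge0 : 0 <= etaV A M S.
Proof.
have [[w w_neq0] | all0] := pselect (exists w : 'rV[R]_n, w != 0).
  have w_gt0 : 0 < normf M w.
    by rewrite lt_def normf_ge0 andbT; apply: contra_neq w_neq0 => /(normf_eq0 posM).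
  by rewrite -(pmulr_lge0 _ w_gt0); apply: le_trans (distA_ge0 _) (distA_Linv_le w).
rewrite /etaV; set X := (X in sup X); suff -> : X = set0 by rewrite sup0.
rewrite -subset0 => r [f [f1 _]]; apply: all0; exists f.
by apply/eqP => f0; move: f1; rewrite f0 normf0 => /eqP; rewrite eq_sym oner_eq0.
Qed.

(* Duality: [|P L^-1 e|^2 = [e, P L^-1 e] = <e, L^-1 P L^-1 e>], and [e] is
   orthogonal to [S], so only the distance of [L^-1 P L^-1 e] to [S] enters. *)
Lemma normf_Aproj_Linv_orth_le e : (forall z, (z <= S)%MS -> bform A e z = 0) ->
  Num.sqrt (lambda1 A M) * normf A (Aproj (Linv A M e)) <= etaV A M S * normf A e.
Proof.
move=> e_orth; set p := Aproj (Linv A M e); set s := Num.sqrt (lambda1 A M).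
set y := Linv A M p.
have [p_le0|p_gt0] := leP (normf A p) 0.
  rewrite (@le_anti _ _ (normf A p) 0) ?p_le0 ?normf_ge0 // mulr0.
  by rewrite mulr_ge0 ?etaV_ge0 ?normf_ge0.
have pp : bform A p p = bform A (Linv A M e) p.
  by apply/esym/eqP; rewrite -subr_eq0 -bformBl Aproj_orth ?Aproj_sub.
have dual : normf A p ^+ 2 = bform A e (y - Aproj y).
  rewrite sqr_normf // pp Linv_bform // (bform_sym posM) -(Linv_bform M posA).
  by rewrite (bform_sym posA) bformBr (e_orth _ (Aproj_sub _)) subr0.
have le : normf A p ^+ 2 <= normf A e * (etaV A M S * normf M p).
  rewrite dual; apply: le_trans (ler_norm _) _.
  apply: le_trans (bform_le_normf posA _ _) _.
  by rewrite ler_wpM2l ?normf_ge0 // -distA_Aproj distA_Linv_le.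
rewrite -(ler_pM2r p_gt0) -mulrA -expr2.
apply: le_trans (ler_wpM2l (sqrtr_ge0 _) le) _.
rewrite -mulrA mulrCA [s * _]mulrCA mulrCA.
by rewrite ler_wpM2l ?etaV_ge0 // ler_wpM2l ?normf_ge0 ?normf_lambda1_le.
Qed.

End EnergyProjection.

Lemma delta_gap_le (R : realType) (N : nat) (lb : 'I_N -> R) (i k : 'I_N) (lam : R) :
  k != i -> delta_gap lb i lam <= `|(lb k)^-1 - lam^-1|.
Proof.
move=> k_neq_i; apply: ge_inf; last by exists k.
by exists 0 => _ [j [_ ->]].
Qed.

Section GalerkinEigenvector.
Variables (R : realType) (n m N : nat) (A M : 'M[R]_n) (S : 'M[R]_(m, n)).
Variables (vb : 'I_N -> 'rV[R]_n) (lb : 'I_N -> R) (lam : R) (v : 'rV[R]_n) (i : 'I_N).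
Hypotheses (posA : sym_posdef A) (posM : sym_posdef M) (rankS : \rank S = N)
  (vb_sub : forall j, (vb j <= S)%MS)
  (vb_orthonormal : forall j1 j2, bform A (vb j1) (vb j2) = (j1 == j2)%:R)
  (vb_galerkin : forall j w, (w <= S)%MS -> bform A (vb j) w = lb j * bform M (vb j) w)
  (lb_gt0 : forall j, 0 < lb j)
  (v_normed : bform A v v = 1)
  (v_eig : forall w, bform A v w = lam * bform M v w)
  (lam_simple : forall u, eigsp A M lam u -> exists c : R, u = c *: v)
  (gap_gt0 : 0 < delta_gap lb i lam).

Local Notation P := (Aproj A vb).
Local Notation a j := (bform A v (vb j)).
Local Notation e := (v - P v).
Local Notation d := (P v - a i *: vb i).
Local Notation s := (Num.sqrt (lambda1 A M)).
Local Notation eta := (etaV A M S).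
Local Notation gap := (delta_gap lb i lam).

Let lam_neq0 : lam != 0.
Proof.
apply/eqP => lam0; move: v_normed.
by rewrite v_eig lam0 mul0r => /eqP; rewrite eq_sym oner_eq0.
Qed.

Let lambda1_pos : 0 < lambda1 A M.
Proof.
apply: (lambda1_gt0 posA posM (w := v)); apply/eqP => v0; move: v_normed.
by rewrite v0 bform0l => /eqP; rewrite eq_sym oner_eq0.
Qed.

Let eta_ge0 : 0 <= eta.
Proof. exact: (etaV_ge0 posA rankS vb_sub vb_orthonormal posM). Qed.

Let e_orth z : (z <= S)%MS -> bform A e z = 0.
Proof. exact: Aproj_orth. Qed.

Let d_sub : (d <= S)%MS.
Proof. by rewrite addmx_sub ?eqmx_opp ?scalemx_sub ?(Aproj_sub A vb_sub). Qed.

Let error_decomp : a i *: vb i - v = - (e + d).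
Proof. by rewrite addrA subrK opprB. Qed.

Lemma bform_M_Aproj_vb w k : bform M (P w) (vb k) = bform A w (vb k) / lb k.
Proof.
have := vb_galerkin k (Aproj_sub A vb_sub w).
rewrite (bform_sym posA) bform_Aproj_vb // (bform_sym posM) => ->.
by rewrite mulrAC mulfV ?mul1r ?gt_eqF.
Qed.

(* Coefficientwise, [d_k = a_k] for [k != i] while
   [<P L^-1 e, vb_k> = [e, vb_k] = a_k (1/lam - 1/lb_k)]. *)
Lemma gap_bound : gap * normf A d <= normf A (P (Linv A M e)).
Proof.
have coef_d k : bform A d (vb k) = if k == i then 0 else a k.
  rewrite bformBl bform_Aproj_vb // bformZl vb_orthonormal eq_sym.
  by case: eqP => [->|_]; rewrite ?mulr1 ?subrr ?mulr0 ?subr0.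
have coef_PLe k : bform A (P (Linv A M e)) (vb k) = a k * (lam^-1 - (lb k)^-1).
  rewrite bform_Aproj_vb // Linv_bform // bformBl bform_M_Aproj_vb.
  have -> : bform M v (vb k) = a k / lam by rewrite v_eig mulrAC mulfV ?mul1r.
  by rewrite mulrBr.
rewrite -ler_sqr ?nnegrE ?mulr_ge0 ?normf_ge0 ?(ltW gap_gt0) //.
rewrite exprMn !(sqr_normf_coord posA rankS vb_sub vb_orthonormal) ?(Aproj_sub A vb_sub) //.
rewrite mulr_sumr.
apply: ler_sum => k _; rewrite coef_d coef_PLe.
case: eqP => [_|/eqP k_neq_i]; first by rewrite expr0n mulr0 sqr_ge0.
rewrite exprMn mulrC ler_wpM2l ?sqr_ge0 // -[(_ - _) ^+ 2]real_normK ?num_real //.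
by rewrite distrC ler_sqr ?nnegrE ?normr_ge0 ?(ltW gap_gt0) ?delta_gap_le.
Qed.

Lemma correction_bound : s * gap * normf A d <= eta * normf A e.
Proof.
rewrite -mulrA.
apply: le_trans (normf_Aproj_Linv_orth_le posA rankS vb_sub vb_orthonormal posM e_orth).
by rewrite ler_wpM2l ?sqrtr_ge0 ?gap_bound.
Qed.

Lemma correction_cross_bound f :
  lambda1 A M * gap * (normf A d * normf A (Linv A M f)) <= eta * normf A e * normf M f.
Proof.
rewrite -[lambda1 A M](sqr_sqrtr (ltW lambda1_pos)).
have -> : s ^+ 2 * gap * (normf A d * normf A (Linv A M f))
          = s * gap * normf A d * (s * normf A (Linv A M f)) by ring.
by rewrite ler_pM ?mulr_ge0 ?sqrtr_ge0 ?normf_ge0 ?(ltW gap_gt0) ?correction_bound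
  ?normf_Linv_le.
Qed.

Lemma eigvec_error_energy :
  normf A (a i *: vb i - v) <=
    Num.sqrt (1 + (lambda1 A M * gap ^+ 2)^-1 * eta ^+ 2) * delta_k A M S lam.
Proof.
have pyth : normf A (a i *: vb i - v) ^+ 2 = normf A e ^+ 2 + normf A d ^+ 2.
  by rewrite error_decomp normfN sqr_normfD_orth // e_orth.
have d_le : normf A d ^+ 2 <= (lambda1 A M * gap ^+ 2)^-1 * eta ^+ 2 * normf A e ^+ 2.
  rewrite -mulrA ler_pdivlMl ?mulr_gt0 ?exprn_gt0 //.
  rewrite -[lambda1 A M](sqr_sqrtr (ltW lambda1_pos)) -!exprMn.
  by rewrite ler_sqr ?nnegrE ?mulr_ge0 ?sqrtr_ge0 ?normf_ge0 ?(ltW gap_gt0) ?correction_bound.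
have K_ge0 : 0 <= 1 + (lambda1 A M * gap ^+ 2)^-1 * eta ^+ 2.
  by rewrite addr_ge0 ?ler01 // mulr_ge0 ?sqr_ge0 // invr_ge0 mulr_ge0 ?sqr_ge0 ?ltW.
apply: le_trans (_ : _ <= Num.sqrt (1 + (lambda1 A M * gap ^+ 2)^-1 * eta ^+ 2) * normf A e) _.
  rewrite -ler_sqr ?nnegrE ?mulr_ge0 ?sqrtr_ge0 ?normf_ge0 // exprMn (sqr_sqrtr K_ge0).
  by rewrite pyth mulrDl mul1r lerD2l.
rewrite ler_wpM2l ?sqrtr_ge0 // -(distA_Aproj posA rankS vb_sub vb_orthonormal).
apply: (distA_le_delta_k posA rankS vb_sub vb_orthonormal) => //.
by rewrite /normf v_normed sqrtr1.
Qed.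

(* Aubin-Nitsche: test the error [ep] against [g = L^-1 ep]; the component of
   [g] in [S] only sees [d], since [e] is orthogonal to [S]. *)
Lemma eigvec_error_L2 :
  normf M (a i *: vb i - v) <=
    (1 + (lambda1 A M * gap)^-1) * eta * normf A (a i *: vb i - v).
Proof.
set ep := a i *: vb i - v; set g := Linv A M ep.
have e_le : normf A e <= normf A ep.
  by rewrite /ep error_decomp normfN normf_le_orth // e_orth.
have L2_split : normf M ep ^+ 2 = bform A ep (g - P g) - bform A d (P g).
  have -> : bform A d (P g) = - bform A ep (P g).
    by rewrite /ep error_decomp bformNl bformDl e_orth ?(Aproj_sub A vb_sub) // add0r opprK.
  by rewrite sqr_normf // -(Linv_bform M posA) (bform_sym posA) opprK -bformDr subrK.
have dist_term : bform A ep (g - P g) <= normf A ep * (eta * normf M ep).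
  apply: le_trans (ler_norm _) _; apply: le_trans (bform_le_normf posA _ _) _.
  rewrite ler_wpM2l ?normf_ge0 // -(distA_Aproj posA rankS vb_sub vb_orthonormal).
  exact: (distA_Linv_le posA rankS vb_sub vb_orthonormal posM).
have cross_term :
    - bform A d (P g) <= (lambda1 A M * gap)^-1 * (eta * normf A ep * normf M ep).
  rewrite ler_pdivlMl ?mulr_gt0 //.
  apply: le_trans (le_trans _ (correction_cross_bound ep)) _.
    rewrite ler_wpM2l ?mulr_ge0 ?(ltW lambda1_pos) ?(ltW gap_gt0) //.
    apply: le_trans (ler_norm _) _; rewrite normrN.
    apply: le_trans (bform_le_normf posA _ _) _.
    by rewrite ler_wpM2l ?normf_ge0 ?(normf_Aproj_le posA rankS vb_sub vb_orthonormal).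
  by rewrite ler_wpM2r ?normf_ge0 // ler_wpM2l.
have [ep_le0|ep_gt0] := leP (normf M ep) 0.
  apply: le_trans ep_le0 _; rewrite !mulr_ge0 ?normf_ge0 //.
  by rewrite addr_ge0 ?ler01 // invr_ge0 mulr_ge0 ?(ltW lambda1_pos) ?(ltW gap_gt0).
rewrite -(ler_pM2r ep_gt0) -expr2 L2_split; set k := (lambda1 A M * gap)^-1.
have -> : (1 + k) * eta * normf A ep * normf M ep
          = normf A ep * (eta * normf M ep) + k * (eta * normf A ep * normf M ep) by ring.
exact: lerD dist_term cross_term.
Qed.

End GalerkinEigenvector.

Theorem lemma3 (R : realType) (n : nat) (A M : 'M[R]_n)
  (lam : R) (v : 'rV[R]_n)
  (m Nk : nat) (S : 'M[R]_(m, n))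
  (lb : 'I_Nk -> R) (vb : 'I_Nk -> 'rV[R]_n)
  (i : 'I_Nk) (E : 'rV[R]_n -> 'rV[R]_n) :
  (* Gelfand-triple data in finite dimension *)
  sym_posdef A -> sym_posdef M ->
  (* (lam, v) exact eigenpair, lam simple *)
  bform A v v = 1 ->
  (forall w, bform A v w = lam * bform M v w) ->
  (forall u, eigsp A M lam u -> exists c : R, u = c *: v) ->
  (* Galerkin eigenpairs on Vk = row space of S, N_k = dim Vk *)
  \rank S = Nk ->
  (forall j, (vb j <= S)%MS) ->
  (forall j1 j2, bform A (vb j1) (vb j2) = (j1 == j2)%:R) ->
  (forall j w, (w <= S)%MS -> bform A (vb j) w = lb j * bform M (vb j) w) ->
  (forall j, 0 < lb j) ->
  (forall j1 j2 : 'I_Nk, (j1 <= j2)%N -> lb j1 <= lb j2) ->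
  (* choice of i and spectral gap *)
  (forall j, `|(lb i)^-1 - lam^-1| <= `|(lb j)^-1 - lam^-1|) ->
  0 < delta_gap lb i lam ->
  (* E_{i,k} : V -> span{vb i}, <E w, vb i> = <w, vb i> *)
  (forall w, exists c : R, E w = c *: vb i) ->
  (forall w, bform A (E w) (vb i) = bform A w (vb i)) ->
  normf A (E v - v) <=
    Num.sqrt (1 + (lambda1 A M * delta_gap lb i lam ^+ 2)^-1 * etaV A M S ^+ 2)
      * delta_k A M S lam
  /\
  normf M (E v - v) <=
    (1 + (lambda1 A M * delta_gap lb i lam)^-1) * etaV A M S * normf A (E v - v).
Proof.
(* The ordering of the [lb j] and the minimality of [i] are only used through
   [delta_gap lb i lam > 0]. *)
move=> posA posM v_normed v_eig lam_simple rankS vb_sub vb_orthonormal vb_galerkin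
  lb_gt0 _ _ gap_gt0 E_span E_proj.
have -> : E v = bform A v (vb i) *: vb i.
  have [c Ev] := E_span v; move: (E_proj v).
  by rewrite Ev bformZl vb_orthonormal eqxx mulr1 => ->.
by split; [apply: eigvec_error_energy | apply: eigvec_error_L2].
Qed.
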